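(* Let $\mathcal{X}$ and $\mathcal{Y}$ be finite additive groups, $n,m\ge1$, and let $F:\mathcal{X}^n\to\mathcal{Y}^m$ be a random linear code, i.e. a random variable taking values in the set of group homomorphisms $\mathcal{X}^n\to\mathcal{Y}^m$. Let $\Sigma_n,\Sigma_m$ be uniformly distributed random permutations of the coordinates of $\mathcal{X}^n$ and $\mathcal{Y}^m$ respectively, let $\bar Y^m$ be a uniformly distributed random vector on $\mathcal{Y}^m$, with $F,\Sigma_n,\Sigma_m,\bar Y^m$ mutually independent, and define $\hat F(\mathbf{x})=\Sigma_m(F(\Sigma_n(\mathbf{x})))+\bar Y^m$. Then for all $\mathbf{x}_1\neq\mathbf{x}_2$ in $\mathcal{X}^n$ and all $\mathbf{y}_1,\mathbf{y}_2\in\mathcal{Y}^m$, $$\Pr\{\hat F(\mathbf{x}_1)=\mathbf{y}_1\}=|\mathcal{Y}|^{-m},$$ $$\Pr\{\hat F(\mathbf{x}_2)=\mathbf{y}_2\mid \hat F(\mathbf{x}_1)=\mathbf{y}_1\}=|\mathcal{Y}|^{-m}\,\alpha(F)(P_{\mathbf{x}_2-\mathbf{x}_1},P_{\mathbf{y}_2-\mathbf{y}_1}).$$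
   Context: For a sequence $\mathbf{x}\in\mathcal{X}^n$, its type $P_{\mathbf{x}}$ is the distribution on $\mathcal{X}$ given by $P_{\mathbf{x}}(a)=N(a|\mathbf{x})/n$, where $N(a|\mathbf{x})$ is the number of occurrences of $a$ in $\mathbf{x}$; $\mathcal{P}_n(\mathcal{X})$ is the set of types of sequences in $\mathcal{X}^n$ (similarly for $\mathcal{Y}^m$). A permutation of coordinates acts on $\mathcal{X}^n$ by permuting entries. For a map $f:\mathcal{X}^n\to\mathcal{Y}^m$, its joint spectrum is $S_{\mathcal{X}\mathcal{Y}}(f)(P,Q)=|\{\mathbf{x}\in\mathcal{X}^n: P_{\mathbf{x}}=P,\ P_{f(\mathbf{x})}=Q\}|/|\mathcal{X}|^n$. For $P\in\mathcal{P}_n(\mathcal{X})$, $Q\in\mathcal{P}_m(\mathcal{Y})$, with $\binom{n}{nP}=n!/\prod_{a}(nP(a))!$ and $\binom{m}{mQ}=m!/\prod_{b}(mQ(b))!$, define for a random map $F$ $$\alpha(F)(P,Q)=\frac{E[S_{\mathcal{X}\mathcal{Y}}(F)(P,Q)]}{\binom{n}{nP}\binom{m}{mQ}\,|\mathcal{X}|^{-n}|\mathcal{Y}|^{-m}}.$$ *)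

From HB Require Import structures.
From mathcomp Require Import all_boot all_order all_algebra all_fingroup.
Set Implicit Arguments. Unset Strict Implicit. Unset Printing Implicit Defensive.
Import Order.TTheory GRing.Theory Num.Theory.
Local Open Scope ring_scope.

(* The type of x, represented by its count vector a |-> N(a|x)
   (for fixed n this is in bijection with P_x = N(.|x)/n). *)
Definition ntype (X : finType) (n : nat) (x : {ffun 'I_n -> X}) : {ffun X -> nat} :=
  [ffun a => #|[set i | x i == a]|].

Definition multinom (X : finType) (n : nat) (c : {ffun X -> nat}) : nat :=
  (n`! %/ \prod_(a : X) (c a)`!)%N.

Definition spectrum (R : realFieldType) (X Y : finType) (n m : nat)
  (f : {ffun 'I_n -> X} -> {ffun 'I_m -> Y})
  (P : {ffun X -> nat}) (Q : {ffun Y -> nat}) : R :=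
  (#|[set x : {ffun 'I_n -> X} | (ntype x == P) && (ntype (f x) == Q)]|)%:R
    / ((#|X| ^ n)%N)%:R.

(* A random map F is given by its probability mass function pF on the
   finite type of all maps X^n -> Y^m. *)
Definition alpha (R : realFieldType) (X Y : finType) (n m : nat)
  (pF : {ffun {ffun 'I_n -> X} -> {ffun 'I_m -> Y}} -> R)
  (P : {ffun X -> nat}) (Q : {ffun Y -> nat}) : R :=
  (\sum_(f : {ffun {ffun 'I_n -> X} -> {ffun 'I_m -> Y}}) pF f * spectrum R f P Q)
  / ((multinom n P)%:R * (multinom m Q)%:R
      * ((#|X|%:R : R) ^- n) * ((#|Y|%:R : R) ^- m)).

Definition permx (T : Type) (n : nat) (s : 'S_n) (x : {ffun 'I_n -> T}) :
  {ffun 'I_n -> T} := [ffun i => x (s i)].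

Definition is_pmf (R : realFieldType) (T : finType) (p : T -> R) : Prop :=
  (forall t, 0 <= p t) /\ \sum_(t : T) p t = 1.

Definition Fhat (X Y : finZmodType) (n m : nat)
  (f : {ffun {ffun 'I_n -> X} -> {ffun 'I_m -> Y}})
  (s1 : 'S_n) (s2 : 'S_m) (yb : {ffun 'I_m -> Y}) (x : {ffun 'I_n -> X}) :
  {ffun 'I_m -> Y} := permx s2 (f (permx s1 x)) + yb.

(* Probability of an event on (F, Sigma_n, Sigma_m, Ybar), these being
   mutually independent, F ~ pF, and the other three uniform. *)
Definition probHat (R : realFieldType) (X Y : finZmodType) (n m : nat)
  (pF : {ffun {ffun 'I_n -> X} -> {ffun 'I_m -> Y}} -> R)
  (E : {ffun {ffun 'I_n -> X} -> {ffun 'I_m -> Y}} -> 'S_n -> 'S_m ->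
       {ffun 'I_m -> Y} -> bool) : R :=
  \sum_(f : {ffun {ffun 'I_n -> X} -> {ffun 'I_m -> Y}})
   \sum_(s1 : 'S_n) \sum_(s2 : 'S_m) \sum_(yb : {ffun 'I_m -> Y})
     pF f / ((n`! * m`! * #|Y| ^ m)%N)%:R * (E f s1 s2 yb)%:R.

Definition condProbHat (R : realFieldType) (X Y : finZmodType) (n m : nat)
  (pF : {ffun {ffun 'I_n -> X} -> {ffun 'I_m -> Y}} -> R)
  (A B : {ffun {ffun 'I_n -> X} -> {ffun 'I_m -> Y}} -> 'S_n -> 'S_m ->
       {ffun 'I_m -> Y} -> bool) : R :=
  probHat pF (fun f s1 s2 yb => A f s1 s2 yb && B f s1 s2 yb) / probHat pF B.

(* Adding the uniform shift [yb] makes every value of [Fhat] uniform, and for two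
   inputs it reduces the joint event to [s2 (F (s1 (x2 - x1))) = y2 - y1], by
   additivity of [F]. The coordinate permutations [s] with [x o s = y] form a coset
   of the stabilizer of [x] when [x] and [y] have the same type, and there are none
   otherwise; the stabilizer is the direct product of the symmetric groups of the
   level sets of [x], of order [prod_a N(a|x)! = n! / multinom n P_x]. Summing over
   [s1] and [s2] therefore counts the inputs of type [P] whose image has type [Q],
   with weight [n! m! / (multinom n P * multinom m Q)]. *)

From HB Require Import structures.
From mathcomp Require Import all_boot all_order all_algebra all_fingroup.
From mathcomp Require Import ring.
Set Implicit Arguments. Unset Strict Implicit. Unset Printing Implicit Defensive.
Import GRing.Theory Num.Theory.

(* The library equips [{ffun I -> V}] with its finite and Z-module structures
   separately, but not with their join. *)
HB.instance Definition _ (I : finType) (V : finZmodType) :=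
  GRing.Zmodule.on {ffun I -> V}.

Definition prod_fact (T : finType) (c : {ffun T -> nat}) : nat :=
  \prod_(a : T) (c a)`!.

Lemma prod_fact_gt0 (T : finType) (c : {ffun T -> nat}) : 0 < prod_fact c.
Proof. by apply/prodn_gt0 => a; apply: fact_gt0. Qed.

Lemma sum_nat_bool (I : finType) (A B : pred I) :
  \sum_(i | A i) B i = #|[set i | A i && B i]|.
Proof. by rewrite -sum1dep_card big_mkcondr. Qed.

Lemma card_finZmod_gt0 (V : finZmodType) : 0 < #|V|.
Proof. by apply/card_gt0P; exists 0%R. Qed.

Section CoordinatePermutations.
Variables (T : finType) (n : nat).
Implicit Types (x y : {ffun 'I_n -> T}) (s t : 'S_n).

Lemma permxM s t x : permx s (permx t x) = permx (s * t) x.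
Proof. by apply/ffunP => i; rewrite !ffunE permM. Qed.

Lemma permx1 x : permx 1 x = x.
Proof. by apply/ffunP => i; rewrite ffunE perm1. Qed.

Lemma permxK s : cancel (@permx T n s) (permx s^-1).
Proof. by move=> x; rewrite permxM mulVg permx1. Qed.

Lemma permxKV s : cancel (@permx T n s^-1) (permx s).
Proof. by move=> x; rewrite permxM mulgV permx1. Qed.

Lemma ntype_permx s x : ntype (permx s x) = ntype x.
Proof.
apply/ffunP => a; rewrite !ffunE -[RHS](card_preimset _ (@perm_inj _ s)).
by apply: eq_card => i; rewrite !inE ffunE.
Qed.

Lemma ntype_count x a : ntype x a = count_mem a (map x (enum 'I_n)).
Proof.
rewrite ffunE count_map enumT cardE /enum_mem size_filter.
by apply: eq_count => i; rewrite !inE.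
Qed.

Lemma eq_ntypeP x y : reflect (exists s, permx s x = y) (ntype x == ntype y).
Proof.
apply: (iffP eqP) => [Exy | [s <-]]; last by rewrite ntype_permx.
have /tuple_permP[s Eyx] : perm_eq [tuple y i | i < n] [tuple x i | i < n].
  apply/allP => a _; apply/eqP.
  by transitivity (ntype y a); [rewrite ntype_count | rewrite -Exy ntype_count].
exists s; apply/ffunP => i; rewrite ffunE.
move/(congr1 (fun r : seq T => nth (y i) r i)): Eyx.
by rewrite -!tnth_nth !tnth_mktuple.
Qed.

Definition permx_stab x := [set s | permx s x == x].

Lemma permx_stabP x s : reflect (forall i, x (s i) = x i) (s \in permx_stab x).
Proof.
rewrite inE; apply: (iffP eqP) => [sx i | sx]; first by rewrite -{2}sx ffunE.
by apply/ffunP => i; rewrite ffunE sx.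
Qed.

Lemma group_set_permx_stab x : group_set (permx_stab x).
Proof.
apply/group_setP; split => [|s t]; rewrite !inE ?permx1 //.
by rewrite -permxM => sx /eqP->.
Qed.
Canonical permx_stab_group x := group (group_set_permx_stab x).

Lemma card_permx_fiber x y :
  #|[set s | permx s x == y]| = (ntype x == ntype y) * #|permx_stab x|.
Proof.
have [/eq_ntypeP[t <-] | Nxy] := boolP (ntype x == ntype y); last first.
  apply: eq_card0 => s; rewrite inE; apply/negP => /eqP Exy.
  by move: Nxy; rewrite -Exy ntype_permx eqxx.
rewrite mul1n -(card_lcoset (permx_stab x) t); apply: eq_card => s.
by rewrite mem_lcoset !inE -permxM (can2_eq (permxKV t) (permxK t)).
Qed.

Lemma sum_permx x (h : {ffun 'I_n -> T} -> nat) :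
  \sum_s h (permx s x) = #|permx_stab x| * \sum_(y | ntype y == ntype x) h y.
Proof.
rewrite (partition_big (fun s => permx s x) predT) //=.
rewrite big_distrr [RHS]big_mkcond /=.
apply: eq_bigr => y _; rewrite (eq_bigr (fun=> h y)) => [|s /eqP-> //].
rewrite sum_nat_cond_const card_permx_fiber eq_sym.
by case: eqP; rewrite ?mul0n ?mul1n ?muln0 // mulnC.
Qed.

End CoordinatePermutations.

Lemma SymS (U : finType) (A B : {set U}) : A \subset B -> Sym A \subset Sym B.
Proof. by move=> AB; apply/subsetP => p; rewrite !inE => /subset_trans; apply. Qed.

Lemma Sym_disjoint (U : finType) (A B : {set U}) :
  [disjoint A & B] -> Sym A :&: Sym B = 1%g.
Proof.
move=> AB; apply/trivgP/subsetP => p /setIP[]; rewrite !inE => pA pB.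
apply/eqP/(perm_on_id (S := set0)); rewrite ?cards0 //.
by apply/subsetP => i ipi; rewrite -(disjoint_setI0 AB) inE (subsetP pA) ?(subsetP pB).
Qed.

Section PermxStabilizer.
Variables (T : finType) (n : nat) (x : {ffun 'I_n -> T}).

Definition fiber a := [set i | x i == a].

Definition permx_stab_on (r : seq T) : {group 'S_n} :=
  (permx_stab_group x :&: Sym_group [set i | x i \in r])%G.

Lemma Sym_fiber_sub_permx_stab a : Sym (fiber a) \subset permx_stab x.
Proof.
apply/subsetP => p; rewrite inE => pa; apply/permx_stabP => i.
have [-> // | pi] := eqVneq (p i) i.
have ia : i \in fiber a by apply: (subsetP pa); rewrite inE pi.
have pia : p i \in fiber a by rewrite (perm_closed _ pa).
by move: ia pia; rewrite !inE => /eqP-> /eqP->.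
Qed.

Lemma permx_stab_restrict s (P : pred T) : s \in permx_stab x ->
  exists2 p : 'S_n, p \in permx_stab x & forall i, p i = if P (x i) then s i else i.
Proof.
move=> /permx_stabP sx.
pose f i := if P (x i) then s i else i.
have f_inj : injective f.
  move=> i j; rewrite /f; case: ifP => Pi; case: ifP => Pj //; first exact: perm_inj.
    by move=> sij; move: Pj; rewrite -sij sx Pi.
  by move=> sij; move: Pi; rewrite sij sx Pj.
exists (perm f_inj); last by move=> i; rewrite permE.
by apply/permx_stabP => i; rewrite permE /f; case: ifP.
Qed.

Lemma permx_stab_on_cons a r :
  a \notin r -> permx_stab_on (a :: r) :=: (Sym (fiber a) * permx_stab_on r)%g.
Proof.
move=> ar; apply/eqP; rewrite eqEsubset; apply/andP; split; last first.
  rewrite mul_subG //=.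
    rewrite subsetI Sym_fiber_sub_permx_stab SymS //.
    by apply/subsetP => i; rewrite !inE => /eqP->; rewrite eqxx.
  rewrite setIS // SymS //.
  by apply/subsetP => i; rewrite !inE => ->; rewrite orbT.
apply/subsetP => s /setIP[sx]; rewrite inE => son.
have [p px pE] := permx_stab_restrict (pred1 a) sx.
have [q qx qE] := permx_stab_restrict (predC1 a) sx.
move/permx_stabP: sx => sx.
apply/mulsgP; exists p q.
- rewrite inE; apply/subsetP => i; rewrite !inE pE /=.
  by case: (x i == a); rewrite ?eqxx.
- rewrite inE qx inE; apply/subsetP => i; rewrite !inE qE /=.
  have [_ | xa] := eqVneq (x i) a; first by rewrite /= eqxx.
  move=> /= si; have := subsetP son i.
  by rewrite !inE (negbTE xa) si; apply.
- apply/permP => i; rewrite permM pE qE /=.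
  by have [xa | xa] := eqVneq (x i) a; rewrite ?sx xa ?eqxx.
Qed.

Lemma Sym_fiber_TI a r : a \notin r -> Sym (fiber a) :&: permx_stab_on r = 1%g.
Proof.
move=> ar; apply/trivgP.
rewrite -(Sym_disjoint (A := fiber a) (B := [set i | x i \in r])).
  by rewrite setIS ?subsetIr.
by apply/pred0P => i /=; rewrite !inE; case: eqP => // ->; apply: negbTE.
Qed.

Lemma permx_stab_on_nil : permx_stab_on [::] = 1%G.
Proof.
apply/val_inj/trivgP/subsetP => p /setIP[_]; rewrite inE => /perm_on_id-> //.
suff -> : [set i | x i \in [::]] = set0 by rewrite cards0.
by apply/setP => i; rewrite !inE.
Qed.

Lemma card_permx_stab_on r : uniq r -> #|permx_stab_on r| = \prod_(a <- r) (ntype x a)`!.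
Proof.
elim: r => [_ | a r IHr /= /andP[ar ur]].
  by rewrite permx_stab_on_nil cards1 big_nil.
rewrite big_cons -IHr // permx_stab_on_cons // TI_cardMg ?Sym_fiber_TI //.
by rewrite card_Sym ffunE.
Qed.

Lemma card_permx_stab : #|permx_stab x| = prod_fact (ntype x).
Proof.
have -> : permx_stab x = permx_stab_on (enum T).
  apply/esym/setIidPl/subsetP => s _; rewrite inE.
  by apply/subsetP => i _; rewrite inE mem_enum.
by rewrite card_permx_stab_on ?enum_uniq // big_enum.
Qed.

End PermxStabilizer.

Lemma card_ntype_class (T : finType) n (x : {ffun 'I_n -> T}) :
  prod_fact (ntype x) * #|[set y : {ffun 'I_n -> T} | ntype y == ntype x]| = n`!.
Proof.
have := sum_permx x (fun=> 1).
by rewrite sum1_card card_Sn sum1dep_card card_permx_stab.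
Qed.

Lemma multinomK (T : finType) n (x : {ffun 'I_n -> T}) :
  multinom n (ntype x) * prod_fact (ntype x) = n`!.
Proof. by rewrite divnK // -(card_ntype_class x) dvdn_mulr. Qed.

Lemma multinom_gt0 (T : finType) n (x : {ffun 'I_n -> T}) :
  0 < multinom n (ntype x).
Proof. by have := fact_gt0 n; rewrite -(multinomK x) muln_gt0 => /andP[]. Qed.

Lemma sum_permx_eq (T : finType) n (z y : {ffun 'I_n -> T}) :
  \sum_(s : 'S_n) (permx s z == y) = (ntype z == ntype y) * prod_fact (ntype y).
Proof.
rewrite (sum_permx z (fun y' => y' == y)) card_permx_stab big_mkcond (bigD1 y) //=.
rewrite eqxx big1 => [|y' /negbTE->]; last by case: ifP.
by rewrite addn0 eq_sym; case: eqP => [->|_]; rewrite ?muln1 ?muln0 ?mul1n.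
Qed.

Lemma permxB (V : zmodType) n (s : 'S_n) (u v : {ffun 'I_n -> V}) :
  permx s (u - v)%R = (permx s u - permx s v)%R.
Proof. by apply/ffunP => i; rewrite !ffunE. Qed.

Lemma sum_translate_eq (V : finZmodType) (z y : V) : \sum_(v : V) (z + v == y)%R = 1.
Proof.
rewrite (bigD1 (y - z)%R) //= addrC subrK eqxx big1 // => v /negbTE vN.
by case: eqP => // Ev; rewrite -Ev (addrC z) addrK eqxx in vN.
Qed.

Lemma sum_translate_eq_pair (V : finZmodType) (z1 z2 y1 y2 : V) :
  \sum_(v : V) ((z2 + v == y2) && (z1 + v == y1))%R = (z2 - z1 == y2 - y1)%R.
Proof.
rewrite (eq_bigr (fun v => (z1 + v == y1)%R * (z2 - z1 == y2 - y1)%R)) => [|v _].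
  by rewrite -big_distrl /= sum_translate_eq mul1n.
rewrite mulnb andbC; have [<- | //] := eqVneq (z1 + v)%R y1.
by rewrite /= opprD addrA (addrAC y2) (inj_eq (addIr _)) eq_sym -subr_eq eq_sym.
Qed.

Section EventCount.
Variables (X Y : finZmodType) (n m : nat).
Local Notation code := {ffun {ffun 'I_n -> X} -> {ffun 'I_m -> Y}}.

Definition count_event (E : code -> 'S_n -> 'S_m -> {ffun 'I_m -> Y} -> bool)
    (f : code) : nat :=
  \sum_(s1 : 'S_n) \sum_(s2 : 'S_m) \sum_(yb : {ffun 'I_m -> Y}) E f s1 s2 yb.

Lemma count_event_Fhat x y f :
  count_event (fun f s1 s2 yb => Fhat f s1 s2 yb x == y) f = n`! * m`!.
Proof.
rewrite /count_event /Fhat.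
under eq_bigr do under eq_bigr do rewrite sum_translate_eq.
by rewrite sum1_card card_Sn sum_nat_const card_Sn.
Qed.

Lemma count_event_Fhat_pair (f : code) : (forall u v, f (u + v)%R = (f u + f v)%R) ->
  forall x1 x2 y1 y2,
  count_event (fun f s1 s2 yb =>
    (Fhat f s1 s2 yb x2 == y2) && (Fhat f s1 s2 yb x1 == y1)) f
  = prod_fact (ntype (x2 - x1)%R) * prod_fact (ntype (y2 - y1)%R)
     * #|[set x | (ntype x == ntype (x2 - x1)%R) && (ntype (f x) == ntype (y2 - y1)%R)]|.
Proof.
move=> fD x1 x2 y1 y2.
have fB u v : f (u - v)%R = (f u - f v)%R.
  by apply/eqP; rewrite eq_sym subr_eq -fD subrK.
rewrite /count_event /Fhat.
under eq_bigr do under eq_bigr do rewrite sum_translate_eq_pair -permxB -fB -permxB.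
under eq_bigr do rewrite sum_permx_eq.
rewrite -big_distrl /=.
rewrite (sum_permx (x2 - x1)%R (fun x => ntype (f x) == ntype (y2 - y1)%R)).
by rewrite card_permx_stab sum_nat_bool mulnAC.
Qed.

End EventCount.

Local Open Scope ring_scope.

Section RandomizedCode.
Variables (R : realFieldType) (X Y : finZmodType) (n m : nat).
Variable pF : {ffun {ffun 'I_n -> X} -> {ffun 'I_m -> Y}} -> R.

Lemma probHatE E :
  probHat pF E = (\sum_f pF f * (count_event E f)%:R) / (n`! * m`! * #|Y| ^ m)%:R.
Proof.
rewrite /probHat mulr_suml; apply: eq_bigr => f _.
rewrite mulrAC /count_event !natr_sum !mulr_sumr.
by do 2![apply: eq_bigr => ? _; rewrite natr_sum mulr_sumr].
Qed.

Hypothesis pF_sum1 : \sum_f pF f = 1.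

Lemma probHat_Fhat x y :
  probHat pF (fun f s1 s2 yb => Fhat f s1 s2 yb x == y) = #|Y|%:R ^- m.
Proof.
rewrite probHatE (eq_bigr (fun f => pF f * (n`! * m`!)%:R)) => [|f _]; last first.
  by rewrite count_event_Fhat.
rewrite -big_distrl /= pF_sum1 mul1r !natrM natrX; field.
by rewrite expf_neq0 ?pnatr_eq0 -?lt0n ?fact_gt0 ?card_finZmod_gt0.
Qed.

Hypothesis pF_additive : forall f, pF f != 0 -> forall u v, f (u + v) = f u + f v.

Lemma probHat_Fhat_pair x1 x2 y1 y2 :
  probHat pF (fun f s1 s2 yb =>
    (Fhat f s1 s2 yb x2 == y2) && (Fhat f s1 s2 yb x1 == y1))
  = (prod_fact (ntype (x2 - x1)) * prod_fact (ntype (y2 - y1)) * #|X| ^ n)%:R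
    * (\sum_f pF f * spectrum R f (ntype (x2 - x1)) (ntype (y2 - y1)))
    / (n`! * m`! * #|Y| ^ m)%:R.
Proof.
rewrite probHatE mulr_sumr; congr (_ / _); apply: eq_bigr => f _.
have [-> | /pF_additive fD] := eqVneq (pF f) 0; first by rewrite !(mul0r, mulr0).
rewrite count_event_Fhat_pair // /spectrum !natrM natrX; field.
by rewrite expf_neq0 // pnatr_eq0 -lt0n card_finZmod_gt0.
Qed.

End RandomizedCode.

Theorem proposition5 (R : realFieldType) (X Y : finZmodType) (n m : nat)
  (pF : {ffun {ffun 'I_n -> X} -> {ffun 'I_m -> Y}} -> R) :
  (0 < n)%N -> (0 < m)%N ->
  is_pmf pF ->
  (* F is a random linear code: supported on group homomorphisms *)
  (forall f, pF f != 0 -> forall x x', f (x + x') = f x + f x') ->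
  forall (x1 x2 : {ffun 'I_n -> X}) (y1 y2 : {ffun 'I_m -> Y}),
    x1 != x2 ->
    probHat pF (fun f s1 s2 yb => Fhat f s1 s2 yb x1 == y1)
      = ((#|Y|%:R : R) ^- m)
    /\
    condProbHat pF (fun f s1 s2 yb => Fhat f s1 s2 yb x2 == y2)
                   (fun f s1 s2 yb => Fhat f s1 s2 yb x1 == y1)
      = ((#|Y|%:R : R) ^- m) * alpha pF (ntype (x2 - x1)) (ntype (y2 - y1)).
Proof.
move=> _ _ [_ pF_sum1] pF_additive x1 x2 y1 y2 _.
split; first exact: probHat_Fhat.
rewrite /condProbHat probHat_Fhat // probHat_Fhat_pair // /alpha.
rewrite -(multinomK (x2 - x1)) -(multinomK (y2 - y1)) !natrM !natrX; field.
by rewrite !expf_neq0 ?pnatr_eq0 -?lt0n ?card_finZmod_gt0 ?multinom_gt0 ?prod_fact_gt0.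
Qed.
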